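(* Let $M$ and $M'$ be two stable matchings in an instance $I$ of SPA-S, and let $M^\land$ be the assignment defined from $M,M'$ in the context. If a project $p_j$ is undersubscribed in $M^\land$, then $p_j$ is undersubscribed in at least one of $M$ and $M'$.
   Context: An instance $I$ of SPA-S consists of a finite set $\mathcal{S}$ of students, a finite set $\mathcal{P}$ of projects and a finite set $\mathcal{L}$ of lecturers. Each student $s_i$ ranks a subset $A_i\subseteq\mathcal{P}$ (its acceptable projects) in strict order. Each project is offered by exactly one lecturer; lecturer $l_k$ offers a nonempty set $P_k\subseteq\mathcal{P}$, the $P_k$ partitioning $\mathcal{P}$. Each lecturer $l_k$ ranks in strict order the students who find at least one project of $P_k$ acceptable. Projects have capacities $c_j\in\mathbb{Z}^+$, lecturers have capacities $d_k\in\mathbb{Z}^+$ with $\max\{c_j:p_j\in P_k\}\le d_k\le\sum\{c_j:p_j\in P_k\}$. A pair $(s_i,p_j)$, $p_j$ offered by $l_k$, is acceptable if $p_j\in A_i$ and $s_i$ is on $l_k$'s list. A matching $M$ is a set of acceptable pairs with each student in at most one pair, $|M(p_j)|\le c_j$, $|M(l_k)|\le d_k$, where for an assignment $M$ (a set of acceptable pairs), $M(s_i)$, $M(p_j)$, $M(l_k)$ denote the project of $s_i$, the students assigned to $p_j$, and the students assigned to projects of $l_k$. Undersubscribed/full means fewer than/exactly capacity many assigned students. An acceptable pair $(s_i,p_j)\notin M$ ($p_j$ offered by $l_k$) blocks $M$ if ($s_i$ is unassigned or prefers $p_j$ to $M(s_i)$) and one of: (P1) $p_j$ and $l_k$ undersubscribed;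 (P2) $p_j$ undersubscribed, $l_k$ full, $s_i\in M(l_k)$; (P3) $p_j$ undersubscribed, $l_k$ full, $l_k$ prefers $s_i$ to the worst student of $M(l_k)$; (P4) $p_j$ full and $l_k$ prefers $s_i$ to the worst student of $M(p_j)$. $M$ is stable if it has no blocking pair. Given stable matchings $M,M'$, $M^\land$ is the assignment in which each student unassigned in both $M$ and $M'$ is unassigned, each student assigned to the same project in both is assigned to that project, and every other student is assigned to the better (in her preference) of her projects in $M$ and $M'$. *)

From mathcomp Require Import all_boot.
Set Implicit Arguments. Unset Strict Implicit. Unset Printing Implicit Defensive.

Record spa (S P L : finType) := Spa {
  acc   : S -> P -> bool;
  rankS : S -> P -> nat;      (* student's rank of a project (smaller = better) *)
  lect  : P -> L;
  rankL : L -> S -> nat;      (* lecturer's rank of a student (smaller = better) *)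
  cap   : P -> nat;
  lcap  : L -> nat
}.

Section Defs.
Variables (S P L : finType) (I : spa S P L).

Definition on_list (l : L) (s : S) : bool :=
  [exists p : P, (lect I p == l) && acc I s p].

Definition valid_spa : Prop :=
  (forall s p q, acc I s p -> acc I s q -> rankS I s p = rankS I s q -> p = q) /\
  (forall l s t, on_list l s -> on_list l t -> rankL I l s = rankL I l t -> s = t) /\
  (forall l, exists p, lect I p == l) /\
  (forall p, 0 < cap I p) /\
  (forall l, 0 < lcap I l) /\
  (forall l, \max_(p | lect I p == l) cap I p <= lcap I l) /\
  (forall l, lcap I l <= \sum_(p | lect I p == l) cap I p).

Definition acceptable (s : S) (p : P) : bool := acc I s p && on_list (lect I p) s.

Definition prefS (s : S) (p q : P) : bool := rankS I s p < rankS I s q.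
Definition prefL (l : L) (s t : S) : bool := rankL I l s < rankL I l t.

Definition assignment := {ffun S -> option P}.

Definition Mp (M : assignment) (p : P) : {set S} := [set s | M s == Some p].
Definition Ml (M : assignment) (l : L) : {set S} :=
  [set s | if M s is Some p then lect I p == l else false].

Definition is_matching (M : assignment) : Prop :=
  (forall s p, M s = Some p -> acceptable s p) /\
  (forall p, #|Mp M p| <= cap I p) /\
  (forall l, #|Ml M l| <= lcap I l).

Definition p_under (M : assignment) p := #|Mp M p| < cap I p.
Definition p_full  (M : assignment) p := #|Mp M p| == cap I p.
Definition l_under (M : assignment) l := #|Ml M l| < lcap I l.
Definition l_full  (M : assignment) l := #|Ml M l| == lcap I l.

(* "l prefers s to the worst student of set X" *)
Definition pref_worst (l : L) (s : S) (X : {set S}) : Prop :=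
  exists2 t, t \in X & prefL l s t.

Definition blocks (M : assignment) (s : S) (p : P) : Prop :=
  let l := lect I p in
  acceptable s p /\ M s != Some p /\
  (if M s is Some q then prefS s p q else True) /\
  [\/ p_under M p /\ l_under M l,
      [/\ p_under M p, l_full M l & s \in Ml M l],
      [/\ p_under M p, l_full M l & pref_worst l s (Ml M l)] |
      p_full M p /\ pref_worst l s (Mp M p)].

Definition stable (M : assignment) : Prop :=
  is_matching M /\ forall s p, ~ blocks M s p.

Definition meet_assign (M M' : assignment) : assignment :=
  [ffun s => match M s, M' s with
             | None, None => None
             | Some p, None => Some p
             | None, Some q => Some q
             | Some p, Some q =>
                 if p == q then Some p
                 else if prefS s p q then Some p else Some q
             end].

End Defs.

From mathcomp Require Import all_boot zify.
Set Implicit Arguments. Unset Strict Implicit. Unset Printing Implicit Defensive.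

(* Let U (resp. U') be the students who strictly prefer M to M' (resp. M' to M).
   If p is full in both M and M', then M^and(p) contains M(p) unless some student
   of M(p) is in U', and contains M'(p) unless some student of M'(p) is in U; call
   p crossing when both happen.  Crossing projects do not exist: for a student
   u in U with M(u) = q offered by l, the pair (u, q) would block M' unless either
   q is full in M' with students that l prefers to u, or l is full in M' with
   such students.  Project by project this yields, for every lecturer l,
     #(U matched to l in M) + #(crossing projects of l) <= #(U matched to l in M'),
   where the second alternative is handled through the capacity of l.  Summed
   over all lecturers, the left side is |U| plus the number of crossing projects
   and the right side is at most |U|. *)

Lemma leq_card_setD (T : finType) (A B : {set T}) :
  #|A| <= #|B| -> #|A :\: B| <= #|B :\: A|.
Proof. have := cardsID B A; have := cardsID A B; rewrite setIC => *; lia. Qed.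

Section Spa.
Variables (S P L : finType) (I : spa S P L).
Hypothesis I_valid : valid_spa I.
Implicit Types (M : assignment S P) (s t u : S) (p q : P) (l : L).

Lemma sum_card_MpI M (X : {set S}) (Q : pred P) :
  \sum_(q | Q q) #|Mp M q :&: X| = #|[set s in X | oapp Q false (M s)]|.
Proof.
under eq_bigr do rewrite -sum1_card.
rewrite (exchange_big_dep (mem [set s in X | oapp Q false (M s)])) /=; last first.
  by move=> q s Qq; rewrite !inE => /andP[/eqP-> ->].
rewrite -sum1_card; apply: eq_bigr => s; rewrite inE => /andP[Xs].
case Ms: (M s) => [q0|] //= Qq0; rewrite (big_pred1 q0) // => q.
rewrite !inE Ms Xs andbT (inj_eq (@Some_inj _)) eq_sym.
by case: eqP => [->|]; rewrite ?andbT ?andbF.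
Qed.

Lemma card_Ml M l : #|Ml I M l| = \sum_(q | lect I q == l) #|Mp M q|.
Proof.
under eq_bigr do rewrite -[Mp M _]setIT.
by rewrite sum_card_MpI; apply: eq_card => s; rewrite !inE; case: (M s).
Qed.

Lemma Mp_sub_Ml M q : Mp M q \subset Ml I M (lect I q).
Proof. by apply/subsetP => s; rewrite !inE => /eqP->. Qed.

Lemma on_list_Ml M l t : is_matching I M -> t \in Ml I M l -> on_list I l t.
Proof.
case=> acc_M _; rewrite inE; case Mt: (M t) => [q|] // /eqP<-.
by case/andP: (acc_M t q Mt).
Qed.

Lemma p_fullE M q : is_matching I M -> p_full I M q = ~~ p_under I M q.
Proof. by case=> _ [capM _]; rewrite /p_full eqn_leq capM leqNgt. Qed.

Lemma l_fullE M l : is_matching I M -> l_full I M l = ~~ l_under I M l.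
Proof. by case=> _ [_ lcapM]; rewrite /l_full eqn_leq lcapM leqNgt. Qed.

Lemma prefL_of_not_worst l s (X : {set S}) :
  {in X, forall t, on_list I l t} -> on_list I l s -> s \notin X ->
  ~ pref_worst I l s X -> {in X, forall t, prefL I l t s}.
Proof.
case: I_valid => _ [strictL _] onX ons sX nw t tX.
rewrite /prefL ltn_neqAle leqNgt; apply/andP; split.
- by apply/eqP => rk; move: sX; rewrite -(strictL l t s (onX t tX) ons rk) tX.
- by apply/negP => st; apply: nw; exists t.
Qed.

Definition better_in M M' : {set S} :=
  [set s | if M s is Some p then (if M' s is Some q then prefS I s p q else true)
           else false].

Lemma better_in_neq M M' s : s \in better_in M M' -> M s != M' s.
Proof.
rewrite inE; case: (M s) => [p|] //; case: (M' s) => [q|] // pq.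
by apply/eqP => -[qp]; rewrite qp /prefS ltnn in pq.
Qed.

Lemma better_in_disjoint M M' : [disjoint better_in M M' & better_in M' M].
Proof.
rewrite -setI_eq0; apply/eqP/setP => s; rewrite !inE.
case: (M s) => [p|]; case: (M' s) => [q|] //; by rewrite /prefS; lia.
Qed.

Lemma better_in_swap M M' s : is_matching I M -> is_matching I M' ->
  M s != M' s -> s \notin better_in M M' -> s \in better_in M' M.
Proof.
case: I_valid => strictS _ [acc_M _] [acc_M' _].
rewrite !inE; case Ms: (M s) => [p|]; case M's: (M' s) => [q|] //= pq.
have /andP[accp _] := acc_M s p Ms; have /andP[accq _] := acc_M' s q M's.
rewrite /prefS -leqNgt leq_eqVlt => /orP[/eqP rk|//].
by move: pq; rewrite (strictS s q p accq accp rk) eqxx.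
Qed.

Lemma card_Mp_setD M M' q : is_matching I M -> is_matching I M' ->
  #|Mp M q :\: Mp M' q| = #|Mp M q :&: better_in M M'| + #|Mp M q :&: better_in M' M|.
Proof.
move=> M_match M'_match.
have -> : Mp M q :\: Mp M' q = Mp M q :&: (better_in M M' :|: better_in M' M).
  apply/setP => s; rewrite in_setD in_setI in_setU [s \in Mp M q]inE [s \in Mp M' q]inE.
  case: (M s =P Some q) => [Ms|_]; rewrite ?andbF //= andbT.
  rewrite -Ms eq_sym; apply/idP/orP => [neq | [] /better_in_neq //]; last by rewrite eq_sym.
  case: (boolP (s \in better_in M M')) => [|sNB]; first by left.
  by right; apply: better_in_swap M_match M'_match neq sNB.
rewrite setIUr; apply/eqP; rewrite (leq_card_setU _ _).2.
apply: disjointWl (subsetIr _ _) _; apply: disjointWr (subsetIr _ _) (better_in_disjoint M M').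
Qed.

Lemma card_Mp_balance M M' q : is_matching I M -> is_matching I M' ->
  #|Mp M q| + (#|Mp M' q :&: better_in M M'| + #|Mp M' q :&: better_in M' M|) =
  #|Mp M' q| + (#|Mp M q :&: better_in M M'| + #|Mp M q :&: better_in M' M|).
Proof.
move=> M_match M'_match.
have := card_Mp_setD q M_match M'_match; have := card_Mp_setD q M'_match M_match.
by have := cardsID (Mp M q) (Mp M' q); have := cardsID (Mp M' q) (Mp M q); rewrite setIC; lia.
Qed.

Definition crossing M M' q : bool :=
  (Mp M q :&: better_in M' M != set0) && (Mp M' q :&: better_in M M' != set0).

Lemma crossingC M M' q : crossing M M' q = crossing M' M q.
Proof. exact: andbC. Qed.

Lemma crossing_leq M M' q :
  crossing M M' q <= minn #|Mp M q :&: better_in M' M| #|Mp M' q :&: better_in M M'|.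
Proof. by rewrite /crossing; case: andP => [[]|] //; rewrite leq_min !card_gt0 => -> ->. Qed.

Lemma meet_assign_eq M M' s : M s = M' s -> meet_assign I M M' s = M s.
Proof. by rewrite ffunE => <-; case: (M s) => [p|] //; rewrite eqxx. Qed.

Lemma meet_assign_better M M' s : s \in better_in M M' -> meet_assign I M M' s = M s.
Proof.
by rewrite inE ffunE; case: (M s) => [p|] //; case: (M' s) => [q|] // ->; rewrite if_same.
Qed.

Lemma meet_assign_worse M M' s : s \in better_in M' M -> meet_assign I M M' s = M' s.
Proof.
rewrite inE ffunE /prefS; case: (M' s) => [q|] //; case: (M s) => [p|] // qp.
have pq : p != q by apply: contraTneq qp => ->; rewrite ltnn.
by rewrite (negbTE pq) ltnNge (ltnW qp).
Qed.

Lemma Mp_sub_meet M M' p : is_matching I M -> is_matching I M' ->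
  Mp M p :&: better_in M' M = set0 -> Mp M p \subset Mp (meet_assign I M M') p.
Proof.
move=> M_match M'_match none; apply/subsetP => s sp.
have Ms : M s = Some p by move: sp; rewrite inE => /eqP.
rewrite inE; case: (M s =P M' s) => [eqs | /eqP neq]; first by rewrite meet_assign_eq // Ms.
suff sB : s \in better_in M M' by rewrite meet_assign_better // Ms.
apply: contraT => /(better_in_swap M_match M'_match neq) sB'.
by have := in_set0 s; rewrite -none in_setI sp sB'.
Qed.

Lemma Mp_sub_meet_r M M' p : is_matching I M -> is_matching I M' ->
  Mp M' p :&: better_in M M' = set0 -> Mp M' p \subset Mp (meet_assign I M M') p.
Proof.
move=> M_match M'_match none; apply/subsetP => s sp.
have M's : M' s = Some p by move: sp; rewrite inE => /eqP.
rewrite inE; case: (M s =P M' s) => [eqs | /eqP neq]; first by rewrite meet_assign_eq // eqs M's.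
have sNB : s \notin better_in M M'.
  by apply/negP => sB; have := in_set0 s; rewrite -none in_setI sp sB.
by rewrite meet_assign_worse ?M's // (better_in_swap M_match M'_match neq sNB).
Qed.

Lemma meet_assign_not_under M M' p : is_matching I M -> is_matching I M' ->
  ~~ p_under I M p -> ~~ p_under I M' p -> ~~ crossing M M' p ->
  ~~ p_under I (meet_assign I M M') p.
Proof.
move=> M_match M'_match; rewrite /p_under /crossing -!leqNgt negb_and !negbK.
move=> capM capM' /orP[/eqP none | /eqP none].
- exact: leq_trans capM (subset_leq_card (Mp_sub_meet M_match M'_match none)).
- exact: leq_trans capM' (subset_leq_card (Mp_sub_meet_r M_match M'_match none)).
Qed.

Section Stable.
Variables M M' : assignment S P.
Hypotheses (M_match : is_matching I M) (M'_stable : stable I M').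

Lemma better_in_nonblocking s q (l := lect I q) : M s = Some q -> s \in better_in M M' ->
  ~ [\/ p_under I M' q /\ l_under I M' l,
        [/\ p_under I M' q, l_full I M' l & s \in Ml I M' l],
        [/\ p_under I M' q, l_full I M' l & pref_worst I l s (Ml I M' l)] |
        p_full I M' q /\ pref_worst I l s (Mp M' q)].
Proof.
move=> Ms sB cond; apply: (M'_stable.2 s q); split; first exact: M_match.1.
split; first by have := better_in_neq sB; rewrite Ms eq_sym.
by split=> //; move: sB; rewrite inE Ms; case: (M' s).
Qed.

Lemma on_list_matched s q : M s = Some q -> on_list I (lect I q) s.
Proof. by move/(M_match.1); case/andP. Qed.

Lemma better_in_under s q (l := lect I q) : M s = Some q -> s \in better_in M M' ->
  p_under I M' q -> l_full I M' l /\ {in Ml I M' l, forall t, prefL I l t s}.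
Proof.
move=> Ms sB qU; have nb := better_in_nonblocking Ms sB.
have lF : l_full I M' l.
  by rewrite (l_fullE l M'_stable.1); apply/negP => lU; apply: nb; apply: Or41.
split=> //; apply: prefL_of_not_worst.
- by move=> t; apply: on_list_Ml M'_stable.1.
- exact: on_list_matched Ms.
- by apply/negP => sl; apply: nb; apply: Or42.
- by move=> worst; apply: nb; apply: Or43.
Qed.

Lemma better_in_Mp s q : M s = Some q -> s \in better_in M M' ->
  {in Mp M' q, forall t, prefL I (lect I q) t s}.
Proof.
move=> Ms sB; have [qU | qF] := boolP (p_under I M' q).
  by move=> t /(subsetP (Mp_sub_Ml _ _)); apply: (better_in_under Ms sB qU).2.
apply: prefL_of_not_worst.
- by move=> t /(subsetP (Mp_sub_Ml _ _)); apply: on_list_Ml M'_stable.1.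
- exact: on_list_matched Ms.
- by rewrite inE eq_sym -Ms better_in_neq.
- move=> worst; apply: (better_in_nonblocking Ms sB); apply: Or44; split=> //.
  by rewrite (p_fullE q M'_stable.1).
Qed.

End Stable.

Section Exchange.
Variables M M' : assignment S P.
Hypotheses (M_stable : stable I M) (M'_stable : stable I M').
Let U := better_in M M'.
Let U' := better_in M' M.

Lemma better_in_exclusive q : Mp M q :&: U != set0 -> Mp M' q :&: U' = set0.
Proof.
case/set0Pn => u /setIP[uq uB]; apply/setP => t; rewrite in_set0; apply/setIP => -[tq tB].
have Mu : M u = Some q by move: uq; rewrite inE => /eqP.
have M't : M' t = Some q by move: tq; rewrite inE => /eqP.
have := better_in_Mp M_stable.1 M'_stable Mu uB tq.
have := better_in_Mp M'_stable.1 M_stable M't tB uq.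
by rewrite /prefL; lia.
Qed.

Lemma crossing_card_le q : (Mp M q :&: U != set0 -> p_full I M' q) ->
  #|Mp M q :&: U| + crossing M M' q <= #|Mp M' q :&: U|.
Proof.
move=> qF; have := crossing_leq M M' q; rewrite -/U -/U'.
have [-> | uU] := eqVneq (Mp M q :&: U) set0; first by rewrite cards0; lia.
have /eqP {}qF := qF uU.
have := card_Mp_setD q M_stable.1 M'_stable.1; have := card_Mp_setD q M'_stable.1 M_stable.1.
rewrite -/U -/U' (better_in_exclusive uU) cards0.
have := @leq_card_setD _ (Mp M q) (Mp M' q); rewrite qF M_stable.1.2.1.
by lia.
Qed.

End Exchange.

Section Counting.
Variables M M' : assignment S P.
Hypotheses (M_stable : stable I M) (M'_stable : stable I M').
Let U := better_in M M'.
Let U' := better_in M' M.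

Lemma lect_crossing_le_of_dominated l u : u \in Ml I M l -> l_full I M' l ->
  {in Ml I M' l, forall t, prefL I l t u} ->
  \sum_(q | lect I q == l) (#|Mp M q :&: U| + crossing M M' q) <=
  \sum_(q | lect I q == l) #|Mp M' q :&: U|.
Proof.
move=> ul lF dom.
have qF q : lect I q = l -> Mp M' q :&: U' != set0 -> p_full I M q.
  move=> ql /set0Pn[t /setIP[tq tB]]; rewrite (p_fullE q M_stable.1); apply/negP => qU.
  have M't : M' t = Some q by move: tq; rewrite inE => /eqP.
  have [_ dom_t] := better_in_under M'_stable.1 M_stable M't tB qU.
  have tl : t \in Ml I M' l by rewrite -ql; apply: (subsetP (Mp_sub_Ml _ _)).
  have := dom t tl; have := dom_t u; rewrite ql => /(_ ul); rewrite /prefL; lia.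
have moved : \sum_(q | lect I q == l) (#|Mp M' q :&: U'| + crossing M M' q) <=
             \sum_(q | lect I q == l) #|Mp M q :&: U'|.
  apply: leq_sum => q /eqP ql; rewrite crossingC.
  exact: (crossing_card_le M'_stable M_stable (qF q ql)).
have cap_l : #|Ml I M l| <= #|Ml I M' l| by rewrite (eqP lF); exact: M_stable.1.2.2.
have balance : \sum_(q | lect I q == l) (#|Mp M q| + (#|Mp M' q :&: U| + #|Mp M' q :&: U'|)) =
                \sum_(q | lect I q == l) (#|Mp M' q| + (#|Mp M q :&: U| + #|Mp M q :&: U'|)).
  by apply: eq_bigr => q _; apply: card_Mp_balance; [exact: M_stable.1 | exact: M'_stable.1].
(* |M(l)| <= d_l = |M'(l)|, and at each project the two matchings differ only by movers *)
rewrite !card_Ml in cap_l; rewrite !big_split /= in balance moved *.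
by lia.
Qed.

Lemma lect_crossing_le l :
  \sum_(q | lect I q == l) (#|Mp M q :&: U| + crossing M M' q) <=
  \sum_(q | lect I q == l) #|Mp M' q :&: U|.
Proof.
have [/existsP[q /and3P[/eqP ql /set0Pn[u /setIP[uq uB]] qU]] | none] :=
  boolP [exists q, [&& lect I q == l, Mp M q :&: U != set0 & p_under I M' q]].
  have Mu : M u = Some q by move: uq; rewrite inE => /eqP.
  have [lF dom] := better_in_under M_stable.1 M'_stable Mu uB qU.
  rewrite -ql; apply: lect_crossing_le_of_dominated lF dom.
  exact: subsetP (Mp_sub_Ml _ _) _ uq.
apply: leq_sum => q ql; apply: (crossing_card_le M_stable M'_stable) => uU.
rewrite (p_fullE q M'_stable.1); apply: contra none => qU.
by apply/existsP; exists q; rewrite ql uU qU.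
Qed.

Lemma no_crossing q : ~~ crossing M M' q.
Proof.
have matched_U : \sum_q #|Mp M q :&: U| = #|U|.
  rewrite sum_card_MpI; apply: eq_card => s; rewrite inE andb_idr // inE.
  by case: (M s).
have matched_U' : \sum_q #|Mp M' q :&: U| <= #|U|.
  by rewrite sum_card_MpI; apply/subset_leq_card/subsetP => s; rewrite inE => /andP[].
have total : \sum_q (#|Mp M q :&: U| + crossing M M' q) <= \sum_q #|Mp M' q :&: U|.
  rewrite !(partition_big (lect I) predT) //=; apply: leq_sum => l _.
  exact: lect_crossing_le.
rewrite big_split matched_U (bigD1 q) //= in total.
by case: (crossing M M' q) total => //=; lia.
Qed.

End Counting.

End Spa.

Theorem lemma6 (S P L : finType) (I : spa S P L) (M M' : assignment S P) (p : P) :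
  valid_spa I -> stable I M -> stable I M' ->
  p_under I (meet_assign I M M') p ->
  p_under I M p \/ p_under I M' p.
Proof.
move=> I_valid M_stable M'_stable meet_under; apply/orP; move: meet_under.
apply: contraLR; rewrite negb_or => /andP[M_full M'_full].
apply: (meet_assign_not_under I_valid M_stable.1 M'_stable.1 M_full M'_full).
exact: (no_crossing I_valid M_stable M'_stable p).
Qed.
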